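(* Let $\mathcal{L}$ be a lattice. If there is an infinite set $L\subseteq\mathcal{L}$ such that for all $\ell,\ell'\in L$, $\ell\sqsubseteq\ell'$ implies $\ell=\ell'$, then the exponential lattice $2^{\mathcal{L}}$ is $\Theta(2^n)$.
   Context: A lattice means a partially ordered set $(\mathcal{L},\sqsubseteq)$ with least element $\bot$ in which any two elements have a least upper bound $\sqcup$; $\bigsqcup S$ denotes the least upper bound of a finite set ($\bigsqcup\emptyset=\bot$). The exponential lattice $2^{\mathcal{L}}$ has as elements subsets of $\mathcal{L}$, preordered by $\ell\sqsubseteq\ell'$ iff for every $\jmath\in\ell$ there is $\jmath'\in\ell'$ with $\jmath\sqsubseteq\jmath'$, and quotiented by the equivalence $\ell\sim\ell'$ iff $\ell\sqsubseteq\ell'$ and $\ell'\sqsubseteq\ell$ (so the order is antisymmetric). The closure set of a finite $S$ is $C(S)=\{\bigsqcup S' : S'\subseteq S\}$, $CS_{\mathcal{L}}(n)=\max\{|C(S)| : S\subseteq\mathcal{L}\text{ finite}, |S|\le n\}$. For $f,g:\mathbb{N}\to\mathbb{N}$, $f$ is $O(g)$ (resp. $\Omega(g)$) iff there exist $N_0\in\mathbb{N}$ and rational $C>0$ with $f(n)\le Cg(n)$ (resp. $\ge$) for all $n\ge N_0$; $\Theta$ means both. A lattice is $\Theta(f(n))$ iff its $CS$ is. *)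

From HB Require Import structures.
From mathcomp Require Import all_boot all_order ssralg ssrnum rat.
From mathcomp Require Import boolp classical_sets cardinality.
Import Order.Theory GRing.Theory Num.Theory.

Set Implicit Arguments.
Unset Strict Implicit.
Unset Printing Implicit Defensive.

(* A "lattice" in the sense of the paper: a partial order with a least
   element in which any two elements have a least upper bound, i.e. a
   MathComp [bJoinSemilatticeType]. *)

Fixpoint subseqs {A : Type} (s : seq A) : seq (seq A) :=
  match s with
  | [::] => [:: [::]]
  | x :: s' => subseqs s' ++ map (cons x) (subseqs s')
  end.

Lemma size_subseqs {A : Type} (s : seq A) : size (subseqs s) = 2 ^ size s.
Proof.
elim: s => [|x s IH] //=.
by rewrite size_cat size_map IH expnS mul2n addnn.
Qed.

Section Exponential.
Context {disp : Order.disp_t} {T : bJoinSemilatticeType disp}.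

(* The preorder of the exponential lattice 2^L on (arbitrary) subsets of L. *)
Definition exp_le (A B : set T) : Prop :=
  forall x, A x -> exists2 y, B y & (x <= y)%O.

Definition exp_equiv (A B : set T) : Prop := exp_le A B /\ exp_le B A.

(* The element of 2^L (equivalence class) represented by a subset A. *)
Definition exp_class (A : set T) : set (set T) := [set B | exp_equiv A B].

Definition exp_bot : set T := set0.
Definition exp_join (A B : set T) : set T := (A `|` B)%classic.
Definition exp_bigjoin (s : seq (set T)) : set T := foldr exp_join exp_bot s.

(* |C(S)| in 2^L, for a finite family S of elements of 2^L given by a list
   of representatives: the number of distinct elements (classes) of 2^L of
   the form \bigsqcup S' for S' a subfamily of S. *)
Definition exp_closure_card (S : seq (set T)) : nat :=
  size (undup [seq exp_class (exp_bigjoin s) | s <- subseqs S]).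

Lemma exp_closure_card_le (S : seq (set T)) :
  exp_closure_card S <= 2 ^ size S.
Proof.
by rewrite /exp_closure_card -size_subseqs -(size_map (fun s => exp_class (exp_bigjoin s))) size_undup.
Qed.

(* CS_{2^L}(n) = max { |C(S)| : |S| <= n }.  Since |C(S)| <= 2^|S| <= 2^n
   (lemma exp_closure_card_le), this maximum is the maximum of the
   attained values k in [0, 2^n]. *)
Definition CS_exp (n : nat) : nat :=
  \max_(k < (2 ^ n).+1 |
        `[< exists S : seq (set T), size S <= n /\ exp_closure_card S = k >])
    (k : nat).

End Exponential.

Definition bigO (f g : nat -> nat) : Prop :=
  exists (N0 : nat) (C : rat), (0 < C)%R /\
    forall n, N0 <= n -> ((f n)%:R <= C * (g n)%:R)%R.

Definition bigOmega (f g : nat -> nat) : Prop :=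
  exists (N0 : nat) (C : rat), (0 < C)%R /\
    forall n, N0 <= n -> ((f n)%:R >= C * (g n)%:R)%R.

Definition bigTheta (f g : nat -> nat) : Prop := bigO f g /\ bigOmega f g.

From HB Require Import structures.
From mathcomp Require Import all_boot all_order ssralg ssrnum rat.
From mathcomp Require Import boolp classical_sets cardinality.
From mathcomp Require Import finmap.
Import GRing.Theory.

Set Implicit Arguments.
Unset Strict Implicit.
Unset Printing Implicit Defensive.

Local Open Scope classical_set_scope.

(* Take n pairwise incomparable elements l_1, ..., l_n and the singletons
   {l_1}, ..., {l_n} of 2^L.  The join of a subfamily is the union of its
   singletons, and for two subsets A, B of an antichain, A ⊑ B in 2^L forces
   A ⊆ B.  So the 2^n subfamilies have 2^n distinct joins, matching the
   trivial upper bound |C(S)| <= 2^|S|. *)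

Section Subseqs.
Variable A : eqType.

Lemma mem_subseqs (s t : seq A) : t \in subseqs s -> subseq t s.
Proof.
elim: s t => [|x s IH] t /=; first by rewrite mem_seq1 => /eqP ->.
rewrite mem_cat => /orP[/IH ts|/mapP[t' /IH t's ->]]; last by rewrite /= eqxx.
exact: subseq_trans ts (subseq_cons s x).
Qed.

Lemma subseqs_uniq (s : seq A) : uniq s -> uniq (subseqs s).
Proof.
elim: s => [|x s IH] //= /andP[xNs /IH us].
rewrite cat_uniq us map_inj_uniq ?us ?andbT; last by move=> t t' [].
apply/hasPn=> _ /mapP[t _ ->]; apply: contra xNs => /mem_subseqs.
by move/mem_subseq; apply; rewrite mem_head.
Qed.

Lemma subseqs_map (B : Type) (f : B -> A) (s : seq B) :
  subseqs (map f s) = map (map f) (subseqs s).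
Proof.
elim: s => [|x s IH] //=.
by rewrite map_cat IH -!map_comp.
Qed.

Lemma eq_subseq_uniq (s t t' : seq A) :
  uniq s -> subseq t s -> subseq t' s -> t =i t' -> t = t'.
Proof.
move=> us /(subseq_uniqP us) t_def /(subseq_uniqP us) t'_def tt'.
by rewrite t_def t'_def; apply: eq_filter => x; rewrite tt'.
Qed.

End Subseqs.

Section ExponentialAntichain.
Context {disp : Order.disp_t} {T : bJoinSemilatticeType disp}.

Lemma exp_class_equiv (A B : set T) :
  exp_class A = exp_class B -> exp_equiv A B.
Proof.
move=> AB; have : exp_class B B by split=> x Bx; exists x.
by rewrite -AB.
Qed.

Lemma exp_bigjoin_set1 (s : seq T) :
  exp_bigjoin [seq [set x] | x <- s] = [set` s].
Proof.
elim: s => [|x s IH] /=; apply/seteqP; split=> y //=.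
- by rewrite /exp_join IH inE => -[->|->]; rewrite ?eqxx ?orbT.
- by rewrite /exp_join IH inE => /orP[/eqP ->|ys]; [left|right].
Qed.

Variable L : set T.
Hypothesis antichainL : forall l l', L l -> L l' -> (l <= l')%O -> l = l'.

Lemma exp_le_antichain (s t : seq T) :
  [set` s] `<=` L -> [set` t] `<=` L ->
  exp_le [set` s] [set` t] -> {subset s <= t}.
Proof.
move=> sL tL st x xs; have [y ty xy] := st x xs.
by rewrite (antichainL (sL x xs) (tL y ty) xy).
Qed.

Lemma exp_closure_card_antichain (s : seq T) :
  uniq s -> [set` s] `<=` L ->
  exp_closure_card [seq [set x] | x <- s] = 2 ^ size s.
Proof.
move=> us sL; rewrite /exp_closure_card subseqs_map -map_comp undup_id.
  by rewrite size_map size_subseqs.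
rewrite map_inj_in_uniq ?subseqs_uniq // => t t' /mem_subseqs ts.
move=> /mem_subseqs t's.
rewrite /= !exp_bigjoin_set1 => /exp_class_equiv[tt' t't].
have tL : [set` t] `<=` L by move=> x /(mem_subseq ts)/sL.
have t'L : [set` t'] `<=` L by move=> x /(mem_subseq t's)/sL.
apply: (eq_subseq_uniq us ts t's) => x.
by apply/idP/idP; [exact: (exp_le_antichain tL t'L)
                  | exact: (exp_le_antichain t'L tL)].
Qed.

End ExponentialAntichain.

Lemma CS_exp_le (disp : Order.disp_t) (T : bJoinSemilatticeType disp) n :
  @CS_exp disp T n <= 2 ^ n.
Proof. by apply/bigmax_leqP => k _; rewrite -ltnS. Qed.

Lemma CS_exp_infinite_antichain (disp : Order.disp_t)
    (T : bJoinSemilatticeType disp) (L : set T) :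
  infinite_set L -> (forall l l', L l -> L l' -> (l <= l')%O -> l = l') ->
  forall n, @CS_exp disp T n = 2 ^ n.
Proof.
move=> infL antichainL n; apply/eqP; rewrite eqn_leq CS_exp_le /=.
have [B BL nB] := infinite_set_fset n infL.
pose s := take n (B : seq T).
have us : uniq s by apply/take_uniq/fset_uniq.
have sL : [set` s] `<=` L by move=> x /mem_take; apply: BL.
have size_s : size s = n by rewrite size_take_min; apply/minn_idPl.
apply: (@leq_bigmax_cond _ _ (fun k : 'I_(2 ^ n).+1 => (k : nat)) ord_max).
apply/asboolP; exists [seq [set x] | x <- s].
by rewrite size_map size_s (exp_closure_card_antichain antichainL us sL) size_s.
Qed.

Lemma bigTheta_refl (f : nat -> nat) : bigTheta f f.
Proof. by split; exists 0%N, 1%R; split=> // n _; rewrite mul1r. Qed.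

Theorem mainTheorem6 (disp : Order.disp_t) (T : bJoinSemilatticeType disp) :
  (exists L : set T, infinite_set L /\
     (forall l l', L l -> L l' -> (l <= l')%O -> l = l')) ->
  bigTheta (@CS_exp disp T) (fun n => 2 ^ n).
Proof.
case=> L [infL antichainL].
rewrite (funext (CS_exp_infinite_antichain infL antichainL)).
exact: bigTheta_refl.
Qed.
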